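(* If all entries $p_{i,n}$ of $P$ are positive, then $F$ is a bijection of $[0,1]$ onto $[0,1]$.
   Context: Let $(m_n)_{n\ge1}$ be finite nonnegative integers and $\tilde Q=\|q_{i,n}\|$ ($i\in\{0,\dots,m_n\}$) with $q_{i,n}>0$, $\sum_{i}q_{i,n}=1$ for all $n$, and $\prod_n q_{i_n,n}=0$ for every digit sequence $(i_n)$. Put $a_{0,n}=0$, $a_{i,n}=\sum_{l<i}q_{l,n}$; $\Delta^{\tilde Q}_{j_1j_2\dots}=a_{j_1,1}+\sum_{n\ge2}a_{j_n,n}\prod_{l<n}q_{j_l,l}$. The nega-$\tilde Q$-representation $x=\Delta^{-\tilde Q}_{i_1i_2\dots}$ means $x=\Delta^{\tilde Q}_{i_1[m_2-i_2]i_3[m_4-i_4]\dots}$; every $x\in[0,1]$ has one. Let $P=\|p_{i,n}\|$ have the same shape with $p_{i,n}\in(-1,1)$, $\sum_ip_{i,n}=1$, $\prod_n|p_{i_n,n}|=0$ for every digit sequence, $0<\sum_{i<c}p_{i,n}<1$ for $c\in\{1,\dots,m_n\}$. Put $\beta_{0,n}=0$, $\beta_{c,n}=\sum_{i<c}p_{i,n}$; for odd $n$: $\tilde p_{i,n}=p_{i,n}$, $\tilde\beta_{i,n}=\beta_{i,n}$; for even $n$: $\tilde p_{i,n}=p_{m_n-i,n}$, $\tilde\beta_{i,n}=\beta_{m_n-i,n}$. $F(x)=\beta_{i_1,1}+\sum_{k\ge2}\tilde\beta_{i_k,k}\prod_{j<k}\tilde p_{i_j,j}$ for $x=\Delta^{-\tilde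 Q}_{i_1i_2\dots}$ (independent of the representation). *)

From Stdlib Require Import Reals ClassicalEpsilon.
From Coquelicot Require Import Coquelicot.
Open Scope R_scope.

(* Matrices are encoded as functions  q : nat -> nat -> R,  q i n = q_{i,n};
   columns are indexed by n >= 1 (values at n = 0 are irrelevant).
   Digit sequences are functions  j : nat -> nat  (only j n for n >= 1 matter). *)

(* acc q i n = sum_{l < i} q l n  (so a_{i,n} = acc q i n, beta_{c,n} = acc p c n) *)
Fixpoint acc (q : nat -> nat -> R) (i n : nat) : R :=
  match i with
  | O => 0
  | S k => acc q k n + q k n
  end.

Fixpoint prodQ (q : nat -> nat -> R) (j : nat -> nat) (c : nat) : R :=
  match c with
  | O => 1
  | S c' => prodQ q j c' * q (j (S c')) (S c')
  end.

Definition digits (m : nat -> nat) (j : nat -> nat) : Prop :=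
  forall n, (1 <= n)%nat -> (j n <= m n)%nat.

Definition DeltaQ (q : nat -> nat -> R) (j : nat -> nat) : R :=
  acc q (j 1%nat) 1%nat
  + Series (fun k => acc q (j (k + 2)%nat) (k + 2)%nat * prodQ q j (k + 1)%nat).

(* x = Delta^{-Q}_{i1 i2 ...}  iff  x = Delta^Q_{i1 [m2-i2] i3 [m4-i4] ...} *)
Definition nega_rep (m : nat -> nat) (q : nat -> nat -> R) (i : nat -> nat) (x : R) : Prop :=
  digits m i /\
  x = DeltaQ q (fun n => if Nat.odd n then i n else (m n - i n)%nat).

Definition ptilde (m : nat -> nat) (p : nat -> nat -> R) (i n : nat) : R :=
  if Nat.odd n then p i n else p (m n - i)%nat n.

Definition btilde (m : nat -> nat) (p : nat -> nat -> R) (i n : nat) : R :=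
  if Nat.odd n then acc p i n else acc p (m n - i)%nat n.

Definition Fdigits (m : nat -> nat) (p : nat -> nat -> R) (i : nat -> nat) : R :=
  acc p (i 1%nat) 1%nat
  + Series (fun k => btilde m p (i (k + 2)%nat) (k + 2)%nat
                     * prodQ (ptilde m p) i (k + 1)%nat).

(* F(x): evaluate the formula on a (chosen) nega-Q representation of x.
   (The paper asserts the value does not depend on the chosen representation.) *)
Definition F (m : nat -> nat) (q p : nat -> nat -> R) (x : R) : R :=
  Fdigits m p (epsilon (inhabits (fun _ : nat => O)) (fun i => nega_rep m q i x)).

Definition Q_admissible (m : nat -> nat) (q : nat -> nat -> R) : Prop :=
  (forall n i, (1 <= n)%nat -> (i <= m n)%nat -> 0 < q i n) /\
  (forall n, (1 <= n)%nat -> acc q (S (m n)) n = 1) /\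
  (forall j, digits m j -> is_lim_seq (fun c => prodQ q j c) 0).

Definition P_admissible (m : nat -> nat) (p : nat -> nat -> R) : Prop :=
  (forall n i, (1 <= n)%nat -> (i <= m n)%nat -> -1 < p i n < 1) /\
  (forall n, (1 <= n)%nat -> acc p (S (m n)) n = 1) /\
  (forall j, digits m j ->
     is_lim_seq (fun c => prodQ (fun i n => Rabs (p i n)) j c) 0) /\
  (forall n c, (1 <= n)%nat -> (1 <= c)%nat -> (c <= m n)%nat ->
     0 < acc p c n < 1).

(* Call a stochastic matrix with positive entries and vanishing digit products
   admissible; Q and, since its entries are positive, P are admissible.  For an
   admissible A, the point Delta^A_j lies in each rank-N cylinder of j, and these
   cylinders shrink to it.  Hence Delta^A_j < Delta^A_j' iff for some N the cylinder of
   j lies strictly left of that of j'.  This separation is decided by the digits alone: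
   a first-level cylinder ends at 1 (starts at 0) only for the last (first) digit, and
   two of them touch only at consecutive digits.  So the order of the values
   Delta^A_j is the same for every admissible A.  Since F(Delta^Q_j) = Delta^P_j for
   the digits j of the nega-representation chosen for x, the order transfer from Q
   to P gives injectivity, and the greedy expansion of any y with respect to P gives
   surjectivity. *)

From Stdlib Require Import Reals Lra Lia ClassicalEpsilon.
From Coquelicot Require Import Coquelicot.
Open Scope R_scope.

Definition shift_seq (j : nat -> nat) : nat -> nat := fun n => j (S n).
Definition shift_mat (a : nat -> nat -> R) : nat -> nat -> R := fun i n => a i (S n).

Definition stochastic (m : nat -> nat) (a : nat -> nat -> R) : Prop :=
  (forall n i, (1 <= n)%nat -> (i <= m n)%nat -> 0 < a i n) /\
  (forall n, (1 <= n)%nat -> acc a (S (m n)) n = 1).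

Lemma Q_admissible_stochastic m a : Q_admissible m a -> stochastic m a.
Proof. intros [Hpos [Hsum _]]. split; assumption. Qed.

Lemma acc_shift_mat a i n : acc (shift_mat a) i n = acc a i (S n).
Proof. induction i as [|i IH]; simpl; [reflexivity|]. rewrite IH. reflexivity. Qed.

Lemma prodQ_succ a j c :
  prodQ a j (S c) = a (j 1%nat) 1%nat * prodQ (shift_mat a) (shift_seq j) c.
Proof.
  induction c as [|c IH]; [cbn [prodQ]; ring|].
  change (prodQ a j (S (S c))) with (prodQ a j (S c) * a (j (S (S c))) (S (S c))).
  rewrite IH. cbn [prodQ]. unfold shift_mat, shift_seq. ring.
Qed.

Lemma prodQ_ext a j j' c : (forall n, (1 <= n)%nat -> j n = j' n) ->
  prodQ a j c = prodQ a j' c.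
Proof.
  intros Hjj'. induction c as [|c IH]; cbn [prodQ]; [reflexivity|].
  rewrite IH, Hjj' by lia. reflexivity.
Qed.

Lemma prodQ_ext_entries a b j c : (forall n, (1 <= n)%nat -> a (j n) n = b (j n) n) ->
  prodQ a j c = prodQ b j c.
Proof.
  intros Hab. induction c as [|c IH]; cbn [prodQ]; [reflexivity|].
  rewrite IH, Hab by lia. reflexivity.
Qed.

Lemma DeltaQ_ext a j j' : (forall n, (1 <= n)%nat -> j n = j' n) ->
  DeltaQ a j = DeltaQ a j'.
Proof.
  intros Hjj'. unfold DeltaQ. rewrite Hjj' by lia. f_equal.
  apply Series_ext. intro k. rewrite Hjj', (prodQ_ext a j j') by (auto; lia). reflexivity.
Qed.

Lemma digits_shift m j : digits m j -> digits (shift_seq m) (shift_seq j).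
Proof. intros Hj n Hn. apply Hj. lia. Qed.

Lemma stochastic_shift m a : stochastic m a -> stochastic (shift_seq m) (shift_mat a).
Proof.
  intros [Hpos Hsum]. split.
  - intros n i Hn Hi. apply Hpos; [lia|exact Hi].
  - intros n Hn. rewrite acc_shift_mat. apply Hsum. lia.
Qed.

(* A digit sequence of the shifted matrix is extended by the digit 0 in front; its
   products differ from the original ones by the constant factor [a 0 1]. *)
Lemma Q_admissible_shift m a : Q_admissible m a -> Q_admissible (shift_seq m) (shift_mat a).
Proof.
  intros Ha. pose proof (Q_admissible_stochastic m a Ha) as Hst.
  destruct (stochastic_shift m a Hst) as [Hpos Hsum]. split; [exact Hpos|split; [exact Hsum|]].
  intros j Hj.
  set (j0 := fun n => match n with 0%nat | 1%nat => 0%nat | S n' => j n' end).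
  assert (Hj0 : digits m j0).
  { intros [|[|n]] Hn; simpl; [lia|lia|]. apply (Hj (S n)). lia. }
  assert (Ha0 : 0 < a 0%nat 1%nat) by (apply (proj1 Hst); lia).
  apply is_lim_seq_ext with (fun c => / a 0%nat 1%nat * prodQ a j0 (S c)).
  - intro c. rewrite prodQ_succ, (prodQ_ext (shift_mat a) (shift_seq j0) j).
    + change (j0 1%nat) with 0%nat. field. lra.
    + intros [|n] Hn; [lia|reflexivity].
  - replace (Finite 0) with (Rbar_mult (/ a 0%nat 1%nat) 0) by (simpl; f_equal; ring).
    apply is_lim_seq_scal_l. apply (is_lim_seq_incr_1 (fun c => prodQ a j0 c)).
    apply (proj2 (proj2 Ha)). exact Hj0.
Qed.

Lemma acc_lt m a n i k : stochastic m a -> (1 <= n)%nat -> (i < k)%nat ->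
  (k <= S (m n))%nat -> acc a i n < acc a k n.
Proof.
  intros [Hpos _] Hn Hik Hk. induction k as [|k IH]; [lia|]. cbn [acc].
  assert (0 < a k n) by (apply Hpos; lia).
  destruct (Nat.eq_dec i k) as [->|Hne]; [lra|].
  assert (acc a i n < acc a k n) by (apply IH; lia). lra.
Qed.

Lemma acc_le m a n i k : stochastic m a -> (1 <= n)%nat -> (i <= k)%nat ->
  (k <= S (m n))%nat -> acc a i n <= acc a k n.
Proof.
  intros Ha Hn Hik Hk. destruct (Nat.eq_dec i k) as [->|Hne]; [lra|].
  left. apply (acc_lt m); auto. lia.
Qed.

Lemma digit_interval m a n d : stochastic m a -> (1 <= n)%nat -> (d <= m n)%nat ->
  0 <= acc a d n /\ acc a d n + a d n <= 1 /\ 0 < a d n.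
Proof.
  intros Ha Hn Hd. split; [|split].
  - apply (acc_le m a n 0 d); auto; lia.
  - change (acc a d n + a d n) with (acc a (S d) n). rewrite <- (proj2 Ha n Hn).
    apply (acc_le m); auto; lia.
  - apply (proj1 Ha); assumption.
Qed.

Lemma prodQ_pos m a j c : stochastic m a -> digits m j -> 0 < prodQ a j c.
Proof.
  intros [Hpos _] Hj. induction c as [|c IH]; cbn [prodQ]; [lra|].
  apply Rmult_lt_0_compat; [exact IH|]. apply Hpos; [lia|]. apply Hj; lia.
Qed.

(* Each tail term is bounded by a telescoping difference of consecutive products. *)
Lemma DeltaQ_tail_series m a j : Q_admissible m a -> digits m j ->
  let t := fun k => acc a (j (k + 2)%nat) (k + 2)%nat * prodQ a j (k + 1)%nat in
  ex_series t /\ 0 <= Series t <= prodQ a j 1.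
Proof.
  intros Ha Hj t. pose proof (Q_admissible_stochastic m a Ha) as Hst.
  set (b := fun k => prodQ a j (k + 1)%nat - prodQ a j (k + 2)%nat).
  assert (Htb : forall k, 0 <= t k <= b k).
  { intro k. unfold t, b. replace (k + 2)%nat with (S (k + 1)) by lia. cbn [prodQ].
    pose proof (prodQ_pos m a j (k + 1) Hst Hj).
    destruct (digit_interval m a (S (k + 1)) (j (S (k + 1))) Hst) as [h1 [h2 h3]];
      [lia|apply Hj; lia|].
    split; nra. }
  assert (Hb : is_series b (prodQ a j 1)).
  { change (is_lim_seq (sum_n b) (prodQ a j 1)).
    apply is_lim_seq_ext with (fun K => prodQ a j 1 - prodQ a j (K + 2)%nat).
    - intro K. induction K as [|K IH]; [rewrite sum_O; reflexivity|].
      rewrite sum_Sn, <- IH. unfold b. replace (S K + 1)%nat with (K + 2)%nat by lia.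
      change plus with Rplus. ring.
    - replace (Finite (prodQ a j 1)) with (Rbar_minus (prodQ a j 1) 0)
        by (simpl; f_equal; ring).
      apply is_lim_seq_minus'; [apply is_lim_seq_const|].
      apply (is_lim_seq_incr_n (fun c => prodQ a j c) 2 0).
      exact (proj2 (proj2 Ha) j Hj). }
  assert (Ht : ex_series t).
  { apply (@ex_series_le R_AbsRing R_CompleteNormedModule t b); [|exists (prodQ a j 1); exact Hb].
    intro n. unfold norm; simpl. rewrite Rabs_pos_eq; apply Htb. }
  split; [exact Ht|split].
  - replace 0 with (Series (fun k => 0 * t k)) by (rewrite Series_scal_l; ring).
    apply Series_le; [intro k; specialize (Htb k); lra|exact Ht].
  - rewrite <- (is_series_unique b _ Hb). apply Series_le; [apply Htb|eexists; exact Hb].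
Qed.

Lemma DeltaQ_bounds m a j : Q_admissible m a -> digits m j -> 0 <= DeltaQ a j <= 1.
Proof.
  intros Ha Hj. destruct (DeltaQ_tail_series m a j Ha Hj) as [_ Htail].
  destruct (digit_interval m a 1 (j 1%nat) (Q_admissible_stochastic m a Ha))
    as [h1 [h2 _]]; [lia|apply Hj; lia|].
  unfold DeltaQ. cbn [prodQ] in Htail. lra.
Qed.

Definition digit_map (a : nat -> nat -> R) (d : nat) (t : R) : R :=
  acc a d 1%nat + a d 1%nat * t.

Lemma DeltaQ_shift m a j : Q_admissible m a -> digits m j ->
  DeltaQ a j = digit_map a (j 1%nat) (DeltaQ (shift_mat a) (shift_seq j)).
Proof.
  intros Ha Hj. destruct (DeltaQ_tail_series m a j Ha Hj) as [Hex _].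
  unfold DeltaQ at 1. rewrite Series_incr_1 by exact Hex.
  unfold digit_map, DeltaQ. rewrite acc_shift_mat.
  rewrite (Series_ext _ (fun k => a (j 1%nat) 1%nat *
    (acc (shift_mat a) (shift_seq j (k + 2)%nat) (k + 2)%nat
     * prodQ (shift_mat a) (shift_seq j) (k + 1)%nat))).
  - rewrite Series_scal_l. cbn [prodQ Nat.add]. unfold shift_seq. ring.
  - intro k. rewrite acc_shift_mat. replace (S k + 1)%nat with (S (k + 1)) by lia.
    rewrite prodQ_succ. unfold shift_seq. replace (S k + 2)%nat with (S (k + 2)) by lia.
    ring.
Qed.

(* [cylinder_point a j N t] is the point at relative position [t] of the rank-[N]
   cylinder of [j]: [t = 0] and [t = 1] give its endpoints. *)
Fixpoint cylinder_point (a : nat -> nat -> R) (j : nat -> nat) (N : nat) (t : R) : R :=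
  match N with
  | O => t
  | S N' => digit_map a (j 1%nat) (cylinder_point (shift_mat a) (shift_seq j) N' t)
  end.

Lemma cylinder_point_sub a j N t s :
  cylinder_point a j N t - cylinder_point a j N s = prodQ a j N * (t - s).
Proof.
  revert a j. induction N as [|N IH]; intros a j; [simpl; ring|].
  rewrite prodQ_succ, Rmult_assoc, <- IH. simpl. unfold digit_map. ring.
Qed.

Lemma cylinder_point_ext a j j' N t : (forall n, (1 <= n)%nat -> j n = j' n) ->
  cylinder_point a j N t = cylinder_point a j' N t.
Proof.
  revert a j j'. induction N as [|N IH]; intros a j j' Hjj'; [reflexivity|]. simpl.
  rewrite Hjj' by lia. f_equal. apply IH. intros n Hn. apply Hjj'. lia.
Qed.

Lemma digit_map_unit m a d t : stochastic m a -> (d <= m 1%nat)%nat -> 0 <= t <= 1 ->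
  0 <= digit_map a d t <= 1.
Proof.
  intros Ha Hd Ht. unfold digit_map.
  destruct (digit_interval m a 1 d Ha) as [h1 [h2 h3]]; [lia|exact Hd|]. nra.
Qed.

Lemma cylinder_point_unit m a j N t : stochastic m a -> digits m j -> 0 <= t <= 1 ->
  0 <= cylinder_point a j N t <= 1.
Proof.
  revert m a j. induction N as [|N IH]; intros m a j Ha Hj Ht; [exact Ht|].
  apply (digit_map_unit m); [exact Ha|apply Hj; lia|].
  exact (IH _ _ _ (stochastic_shift m a Ha) (digits_shift m j Hj) Ht).
Qed.

Lemma DeltaQ_in_cylinder m a j N : Q_admissible m a -> digits m j ->
  cylinder_point a j N 0 <= DeltaQ a j <= cylinder_point a j N 1.
Proof.
  revert m a j. induction N as [|N IH]; intros m a j Ha Hj.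
  - apply (DeltaQ_bounds m); assumption.
  - destruct (IH (shift_seq m) (shift_mat a) (shift_seq j)) as [h1 h2];
      [apply Q_admissible_shift|apply digits_shift|]; try assumption.
    destruct (digit_interval m a 1 (j 1%nat) (Q_admissible_stochastic m a Ha))
      as [_ [_ h3]]; [lia|apply Hj; lia|].
    rewrite (DeltaQ_shift m a j Ha Hj). simpl. unfold digit_map. split; nra.
Qed.

Lemma prodQ_eventually_lt m a j e : Q_admissible m a -> digits m j -> 0 < e ->
  exists N0, forall N, (N0 <= N)%nat -> prodQ a j N < e.
Proof.
  intros Ha Hj He. pose proof (proj2 (proj2 Ha) j Hj) as Hlim.
  apply is_lim_seq_spec in Hlim. destruct (Hlim (mkposreal e He)) as [N0 HN0].
  exists N0. intros N HN. specialize (HN0 N HN). simpl in HN0.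
  rewrite Rminus_0_r in HN0. apply Rabs_def2 in HN0. lra.
Qed.

Lemma DeltaQ_eq_of_in_cylinders m a j x : Q_admissible m a -> digits m j ->
  (forall N, cylinder_point a j N 0 <= x <= cylinder_point a j N 1) -> DeltaQ a j = x.
Proof.
  intros Ha Hj Hx. destruct (Req_dec (DeltaQ a j) x) as [E|Hne]; [exact E|exfalso].
  destruct (prodQ_eventually_lt m a j (Rabs (DeltaQ a j - x)) Ha Hj) as [N HN];
    [apply Rabs_pos_lt; lra|].
  specialize (HN N (le_n N)). specialize (Hx N).
  pose proof (cylinder_point_sub a j N 1 0).
  pose proof (DeltaQ_in_cylinder m a j N Ha Hj).
  assert (Rabs (DeltaQ a j - x) <= prodQ a j N) by (apply Rabs_le; lra). lra.
Qed.

Lemma digit_map_eq_1 m a d t : stochastic m a -> (d <= m 1%nat)%nat -> 0 <= t <= 1 ->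
  (digit_map a d t = 1 <-> d = m 1%nat /\ t = 1).
Proof.
  intros Ha Hd Ht. unfold digit_map.
  destruct (digit_interval m a 1 d Ha) as [h1 [h2 h3]]; [lia|exact Hd|].
  pose proof (proj2 Ha 1%nat (le_n 1)) as Hsum. split.
  - intro E. destruct (Nat.eq_dec d (m 1%nat)) as [->|Hne].
    + split; [reflexivity|]. cbn [acc] in Hsum. nra.
    + exfalso. assert (acc a (S d) 1 < acc a (S (m 1%nat)) 1) by (apply (acc_lt m); auto; lia).
      cbn [acc] in *. nra.
  - intros [-> ->]. cbn [acc] in Hsum. lra.
Qed.

Lemma digit_map_eq_0 m a d t : stochastic m a -> (d <= m 1%nat)%nat -> 0 <= t <= 1 ->
  (digit_map a d t = 0 <-> d = 0%nat /\ t = 0).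
Proof.
  intros Ha Hd Ht. unfold digit_map.
  destruct (digit_interval m a 1 d Ha) as [h1 [h2 h3]]; [lia|exact Hd|]. split.
  - intro E. destruct d as [|d].
    + split; [reflexivity|]. simpl in E.
      apply Rmult_eq_reg_l with (a 0%nat 1%nat); lra.
    + exfalso. assert (acc a 0 1 < acc a (S d) 1) by (apply (acc_lt m); auto; lia).
      cbn [acc] in *. nra.
  - intros [-> ->]. simpl. ring.
Qed.

(* Two first-level cylinders [u] and [v] can only touch when [v = u + 1]. *)
Lemma digit_map_lt_iff m a u v s t : stochastic m a ->
  (u <= m 1%nat)%nat -> (v <= m 1%nat)%nat -> 0 <= s <= 1 -> 0 <= t <= 1 ->
  (digit_map a u s < digit_map a v t <->
   (u = v /\ s < t) \/ ((u < v)%nat /\ ~ (v = S u /\ s = 1 /\ t = 0))).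
Proof.
  intros Ha Hu Hv Hs Ht. unfold digit_map.
  destruct (digit_interval m a 1 u Ha) as [u1 [u2 u3]]; [lia|exact Hu|].
  destruct (digit_interval m a 1 v Ha) as [v1 [v2 v3]]; [lia|exact Hv|].
  destruct (Compare_dec.lt_eq_lt_dec u v) as [[Huv| ->]|Hvu].
  - assert (Hle : acc a (S u) 1 <= acc a v 1) by (apply (acc_le m); auto; lia).
    cbn [acc] in Hle. split.
    + intro Hlt. right. split; [exact Huv|]. intros [-> [-> ->]]. cbn [acc] in Hlt. lra.
    + intros [[-> _]|[_ Hsep]]; [lia|].
      destruct (Rlt_le_dec (digit_map a u s) (digit_map a v t)) as [h|h];
        [exact h|exfalso; apply Hsep]; unfold digit_map in h.
      assert (s = 1) by nra. assert (t = 0) by nra.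
      split; [|split; assumption].
      destruct (Nat.eq_dec v (S u)) as [E|Hne]; [exact E|exfalso].
      assert (acc a (S u) 1 < acc a v 1) by (apply (acc_lt m); auto; lia).
      cbn [acc] in *. nra.
  - split.
    + intro h. left. split; [reflexivity|nra].
    + intros [[_ h]|[h _]]; [nra|lia].
  - assert (Hle : acc a (S v) 1 <= acc a u 1) by (apply (acc_le m); auto; lia).
    cbn [acc] in Hle. split.
    + intro h. exfalso. nra.
    + intros [[E _]|[h _]]; lia.
Qed.

Lemma cylinder_shape_indep m a b j j' N : stochastic m a -> stochastic m b ->
  digits m j -> digits m j' ->
  (cylinder_point a j N 1 = 1 <-> cylinder_point b j N 1 = 1) /\
  (cylinder_point a j N 0 = 0 <-> cylinder_point b j N 0 = 0) /\
  (cylinder_point a j N 1 < cylinder_point a j' N 0 <->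
   cylinder_point b j N 1 < cylinder_point b j' N 0).
Proof.
  revert m a b j j'. induction N as [|N IH]; intros m a b j j' Ha Hb Hj Hj'.
  - simpl. split; [tauto|split; [tauto|split; intro; lra]].
  - pose proof (stochastic_shift m a Ha) as Ha'. pose proof (stochastic_shift m b Hb) as Hb'.
    pose proof (digits_shift m j Hj) as Hs. pose proof (digits_shift m j' Hj') as Hs'.
    destruct (IH _ _ _ _ _ Ha' Hb' Hs Hs') as [I1 [I2 I3]].
    destruct (IH _ _ _ _ _ Ha' Hb' Hs' Hs) as [I4 [I5 _]].
    assert (Hu : (j 1%nat <= m 1%nat)%nat) by (apply Hj; lia).
    assert (Hv : (j' 1%nat <= m 1%nat)%nat) by (apply Hj'; lia).
    pose proof (fun i t => cylinder_point_unit _ _ i N t Ha') as Ua.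
    pose proof (fun i t => cylinder_point_unit _ _ i N t Hb') as Ub.
    assert (U0 : 0 <= 0 <= 1) by lra. assert (U1 : 0 <= 1 <= 1) by lra.
    cbn [cylinder_point].
    rewrite (digit_map_eq_1 m a _ _ Ha Hu (Ua _ _ Hs U1)),
      (digit_map_eq_1 m b _ _ Hb Hu (Ub _ _ Hs U1)),
      (digit_map_eq_0 m a _ _ Ha Hu (Ua _ _ Hs U0)),
      (digit_map_eq_0 m b _ _ Hb Hu (Ub _ _ Hs U0)),
      (digit_map_lt_iff m a _ _ _ _ Ha Hu Hv (Ua _ _ Hs U1) (Ua _ _ Hs' U0)),
      (digit_map_lt_iff m b _ _ _ _ Hb Hu Hv (Ub _ _ Hs U1) (Ub _ _ Hs' U0)).
    tauto.
Qed.

Lemma DeltaQ_lt_iff_separated m a j j' : Q_admissible m a -> digits m j -> digits m j' ->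
  (DeltaQ a j < DeltaQ a j' <->
   exists N, cylinder_point a j N 1 < cylinder_point a j' N 0).
Proof.
  intros Ha Hj Hj'. split.
  - intro Hlt. set (e := (DeltaQ a j' - DeltaQ a j) / 2).
    destruct (prodQ_eventually_lt m a j e Ha Hj) as [N1 HN1]; [unfold e; lra|].
    destruct (prodQ_eventually_lt m a j' e Ha Hj') as [N2 HN2]; [unfold e; lra|].
    set (N := Nat.max N1 N2). exists N.
    specialize (HN1 N (Nat.le_max_l N1 N2)). specialize (HN2 N (Nat.le_max_r N1 N2)).
    pose proof (cylinder_point_sub a j N 1 0). pose proof (cylinder_point_sub a j' N 1 0).
    pose proof (DeltaQ_in_cylinder m a j N Ha Hj).
    pose proof (DeltaQ_in_cylinder m a j' N Ha Hj').
    unfold e in *. lra.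
  - intros [N HN].
    pose proof (DeltaQ_in_cylinder m a j N Ha Hj).
    pose proof (DeltaQ_in_cylinder m a j' N Ha Hj'). lra.
Qed.

Lemma DeltaQ_lt_transfer m a b j j' : Q_admissible m a -> Q_admissible m b ->
  digits m j -> digits m j' -> DeltaQ a j < DeltaQ a j' -> DeltaQ b j < DeltaQ b j'.
Proof.
  intros Ha Hb Hj Hj'.
  rewrite (DeltaQ_lt_iff_separated m a j j'), (DeltaQ_lt_iff_separated m b j j') by assumption.
  intros [N HN]. exists N.
  apply (cylinder_shape_indep m a b j j' N); try apply Q_admissible_stochastic; assumption.
Qed.

Lemma DeltaQ_eq_transfer m a b j j' : Q_admissible m a -> Q_admissible m b ->
  digits m j -> digits m j' -> DeltaQ a j = DeltaQ a j' -> DeltaQ b j = DeltaQ b j'.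
Proof.
  intros Ha Hb Hj Hj' E.
  destruct (Rtotal_order (DeltaQ b j) (DeltaQ b j')) as [h|[h|h]]; [exfalso| |exfalso].
  - apply (DeltaQ_lt_transfer m b a j j') in h; auto. lra.
  - exact h.
  - apply (DeltaQ_lt_transfer m b a j' j) in h; auto. lra.
Qed.

Fixpoint greedy_digit (a : nat -> nat -> R) (n : nat) (x : R) (k : nat) : nat :=
  match k with
  | O => O
  | S k' => if Rle_dec (acc a (S k') n) x then S k' else greedy_digit a n x k'
  end.

Lemma greedy_digit_spec a n x k : 0 <= x ->
  (greedy_digit a n x k <= k)%nat /\ acc a (greedy_digit a n x k) n <= x /\
  (forall i, (greedy_digit a n x k < i)%nat -> (i <= k)%nat -> x < acc a i n).
Proof.
  intros Hx. induction k as [|k IH].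
  - simpl. split; [lia|split; [lra|intros; lia]].
  - cbn [greedy_digit]. destruct (Rle_dec (acc a (S k) n) x) as [h|h].
    + split; [lia|split; [exact h|intros; lia]].
    + destruct IH as [i1 [i2 i3]]. split; [lia|split; [exact i2|]].
      intros i Hi Hik. destruct (Nat.eq_dec i (S k)) as [->|Hne]; [lra|]. apply i3; lia.
Qed.

Definition first_digit (m : nat -> nat) (a : nat -> nat -> R) (x : R) : nat :=
  greedy_digit a 1 x (m 1%nat).

Definition remainder (m : nat -> nat) (a : nat -> nat -> R) (x : R) : R :=
  (x - acc a (first_digit m a x) 1%nat) / a (first_digit m a x) 1%nat.

Lemma first_digit_spec m a x : stochastic m a -> 0 <= x <= 1 ->
  (first_digit m a x <= m 1%nat)%nat /\ 0 <= remainder m a x <= 1 /\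
  x = digit_map a (first_digit m a x) (remainder m a x).
Proof.
  intros Ha Hx. unfold remainder, digit_map. set (d := first_digit m a x).
  destruct (greedy_digit_spec a 1 x (m 1%nat) (proj1 Hx)) as [Hd [Hlow Hup]].
  fold (first_digit m a x) d in Hd, Hlow, Hup.
  destruct (digit_interval m a 1 d Ha) as [h1 [h2 h3]]; [lia|exact Hd|].
  assert (Hx' : x <= acc a d 1 + a d 1%nat).
  { change (acc a d 1 + a d 1%nat) with (acc a (S d) 1).
    destruct (Nat.eq_dec d (m 1%nat)) as [E|Hne].
    - rewrite E, (proj2 Ha 1%nat (le_n 1)). lra.
    - left. apply Hup; lia. }
  split; [exact Hd|split].
  - split.
    + apply Rdiv_le_0_compat; lra.
    + apply Rmult_le_reg_r with (a d 1%nat); [exact h3|].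
      unfold Rdiv. rewrite Rmult_assoc, Rinv_l by lra. lra.
  - field. lra.
Qed.

Fixpoint greedy_digits (m : nat -> nat) (a : nat -> nat -> R) (x : R) (n : nat) : nat :=
  match n with
  | O => O
  | S O => first_digit m a x
  | S n' => greedy_digits (shift_seq m) (shift_mat a) (remainder m a x) n'
  end.

Lemma greedy_digits_shift m a x n : (1 <= n)%nat ->
  shift_seq (greedy_digits m a x) n = greedy_digits (shift_seq m) (shift_mat a) (remainder m a x) n.
Proof. intros Hn. destruct n as [|n]; [lia|reflexivity]. Qed.

Lemma greedy_digits_digits m a x : stochastic m a -> 0 <= x <= 1 ->
  digits m (greedy_digits m a x).
Proof.
  intros Ha Hx n. revert m a x Ha Hx. induction n as [|n IH]; intros m a x Ha Hx Hn; [lia|].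
  destruct (first_digit_spec m a x Ha Hx) as [Hd [Hr _]].
  destruct n as [|n]; [exact Hd|].
  apply (IH (shift_seq m) (shift_mat a) (remainder m a x)); [apply stochastic_shift|..];
    auto; lia.
Qed.

Lemma greedy_digits_in_cylinders m a x N : stochastic m a -> 0 <= x <= 1 ->
  cylinder_point a (greedy_digits m a x) N 0 <= x <= cylinder_point a (greedy_digits m a x) N 1.
Proof.
  revert m a x. induction N as [|N IH]; intros m a x Ha Hx; [simpl; lra|].
  destruct (first_digit_spec m a x Ha Hx) as [Hd [Hr Hxr]].
  destruct (digit_interval m a 1 (first_digit m a x) Ha) as [_ [_ h3]]; [lia|exact Hd|].
  destruct (IH _ _ _ (stochastic_shift m a Ha) Hr) as [Hlow Hup].
  cbn [cylinder_point]. change (greedy_digits m a x 1%nat) with (first_digit m a x).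
  rewrite !(cylinder_point_ext (shift_mat a) (shift_seq (greedy_digits m a x))
    (greedy_digits (shift_seq m) (shift_mat a) (remainder m a x)))
    by (intros; apply greedy_digits_shift; assumption).
  unfold digit_map in *. split; nra.
Qed.

Lemma DeltaQ_onto m a x : Q_admissible m a -> 0 <= x <= 1 ->
  exists j, digits m j /\ DeltaQ a j = x.
Proof.
  intros Ha Hx. pose proof (Q_admissible_stochastic m a Ha) as Hst.
  exists (greedy_digits m a x). split; [apply greedy_digits_digits; assumption|].
  apply (DeltaQ_eq_of_in_cylinders m); [exact Ha|apply greedy_digits_digits; assumption|].
  intro N. apply greedy_digits_in_cylinders; assumption.
Qed.

Definition alt_digits (m : nat -> nat) (i : nat -> nat) : nat -> nat :=
  fun n => if Nat.odd n then i n else (m n - i n)%nat.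

Lemma digits_alt m i : digits m i -> digits m (alt_digits m i).
Proof. intros Hi n Hn. unfold alt_digits. destruct (Nat.odd n); [apply Hi; exact Hn|lia]. Qed.

Lemma alt_digitsK m i : digits m i -> forall n, (1 <= n)%nat -> alt_digits m (alt_digits m i) n = i n.
Proof.
  intros Hi n Hn. unfold alt_digits. destruct (Nat.odd n); [reflexivity|].
  specialize (Hi n Hn). lia.
Qed.

Lemma Fdigits_alt m p i : Fdigits m p i = DeltaQ p (alt_digits m i).
Proof.
  assert (Hprod : forall c, prodQ (ptilde m p) i c = prodQ p (alt_digits m i) c).
  { induction c as [|c IH]; cbn [prodQ]; [reflexivity|]. rewrite IH.
    unfold ptilde, alt_digits. destruct (Nat.odd (S c)); reflexivity. }
  unfold Fdigits, DeltaQ. f_equal. apply Series_ext. intro k.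
  rewrite Hprod. unfold btilde, alt_digits. destruct (Nat.odd (k + 2)); reflexivity.
Qed.

Lemma F_common_digits m q p x : Q_admissible m q -> 0 <= x <= 1 ->
  exists j, digits m j /\ x = DeltaQ q j /\ F m q p x = DeltaQ p j.
Proof.
  intros Hq Hx. set (choice := epsilon (inhabits (fun _ : nat => O)) (fun i => nega_rep m q i x)).
  assert (Hrep : nega_rep m q choice x).
  { apply epsilon_spec. destruct (DeltaQ_onto m q x Hq Hx) as [j [Hj E]].
    exists (alt_digits m j). split; [apply digits_alt; exact Hj|].
    rewrite <- E. apply DeltaQ_ext. intros n Hn. symmetry. apply alt_digitsK; assumption. }
  destruct Hrep as [Hi E]. exists (alt_digits m choice).
  split; [apply digits_alt; exact Hi|split; [exact E|apply Fdigits_alt]].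
Qed.

Lemma Q_admissible_of_positive m p : P_admissible m p ->
  (forall n i, (1 <= n)%nat -> (i <= m n)%nat -> 0 < p i n) -> Q_admissible m p.
Proof.
  intros [_ [Hsum [Hlim _]]] Hpos. split; [exact Hpos|split; [exact Hsum|]].
  intros j Hj. apply is_lim_seq_ext with (2 := Hlim j Hj). intro c.
  apply prodQ_ext_entries. intros n Hn. apply Rabs_pos_eq. left. apply Hpos; [exact Hn|].
  apply Hj; exact Hn.
Qed.

Theorem mainTheorem6 (m : nat -> nat) (q p : nat -> nat -> R) :
  Q_admissible m q ->
  P_admissible m p ->
  (forall n i, (1 <= n)%nat -> (i <= m n)%nat -> 0 < p i n) ->
  (forall x, 0 <= x <= 1 -> 0 <= F m q p x <= 1) /\
  (forall x y, 0 <= x <= 1 -> 0 <= y <= 1 -> F m q p x = F m q p y -> x = y) /\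
  (forall y, 0 <= y <= 1 -> exists x, 0 <= x <= 1 /\ F m q p x = y).
Proof.
  intros Hq HP Hpos. pose proof (Q_admissible_of_positive m p HP Hpos) as Hp.
  split; [|split].
  - intros x Hx. destruct (F_common_digits m q p x Hq Hx) as [j [Hj [_ ->]]].
    apply (DeltaQ_bounds m); assumption.
  - intros x y Hx Hy E.
    destruct (F_common_digits m q p x Hq Hx) as [j [Hj [-> Fx]]].
    destruct (F_common_digits m q p y Hq Hy) as [j' [Hj' [-> Fy]]].
    apply (DeltaQ_eq_transfer m p q); try assumption. congruence.
  - intros y Hy. destruct (DeltaQ_onto m p y Hp Hy) as [j [Hj <-]].
    pose proof (DeltaQ_bounds m q j Hq Hj) as Hx. exists (DeltaQ q j). split; [exact Hx|].
    destruct (F_common_digits m q p _ Hq Hx) as [j' [Hj' [E ->]]].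
    symmetry. apply (DeltaQ_eq_transfer m q p); assumption.
Qed.
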